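(* Let $n,m\ge1$ and $A\subseteq\Omega_n$. Then $\mu_{n+m}(A\times\{0,1\}^m)=\mu_n(A)$.
   Context: For $n\ge1$, $\Omega_n$ is the set of strings $\omega=\alpha_0\alpha_1\cdots\alpha_n$ with $\alpha_k\in\{0,1\}$, $\alpha_0=0$. For $\omega=\alpha_0\cdots\alpha_n$, $\omega'=\alpha'_0\cdots\alpha'_n\in\Omega_n$ let $D^n(\omega,\omega')=2^{-n}\prod_{k=1}^n i^{|\alpha_k-\alpha_{k-1}|}\prod_{k=1}^n i^{-|\alpha'_k-\alpha'_{k-1}|}\,\delta_{\alpha_n\alpha'_n}$ ($i=\sqrt{-1}$), and for $A\subseteq\Omega_n$ let $\mu_n(A)=\sum_{\omega,\omega'\in A}D^n(\omega,\omega')$. For $A\subseteq\Omega_n$, $A\times\{0,1\}^m\subseteq\Omega_{n+m}$ is the set of strings obtained by appending to the right of some $\omega\in A$ an arbitrary string of $m$ bits. *)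

From mathcomp Require Import all_boot all_order all_algebra algC.
Set Implicit Arguments. Unset Strict Implicit. Unset Printing Implicit Defensive.
Import Order.TTheory GRing.Theory Num.Theory.
Local Open Scope ring_scope.

(* A string alpha_0 alpha_1 ... alpha_n of bits is a finite function 'I_n.+1 -> bool. *)
Notation bstr n := {ffun 'I_n.+1 -> bool}.

Definition bit n (w : bstr n) (k : nat) : bool := w (inord k).

Definition Omega (n : nat) : {set bstr n} := [set w : bstr n | w ord0 == false].

(* i^{|a - b|} for bits a, b *)
Definition ipow (a b : bool) : algC := if a != b then 'i else 1.

Definition Dn (n : nat) (w w' : bstr n) : algC :=
  (2%:R ^- n) *
  (\prod_(1 <= k < n.+1) ipow (bit w k) (bit w k.-1)) *
  (\prod_(1 <= k < n.+1) (ipow (bit w' k) (bit w' k.-1))^-1) *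
  (bit w n == bit w' n)%:R.

Definition mu (n : nat) (A : {set bstr n}) : algC :=
  \sum_(w in A) \sum_(w' in A) Dn w w'.

Lemma ext_le (n m : nat) : (n.+1 <= (n + m).+1)%N.
Proof. by rewrite ltnS leq_addr. Qed.

Definition restr (n m : nat) (w : bstr (n + m)) : bstr n :=
  [ffun i : 'I_n.+1 => w (widen_ord (ext_le n m) i)].

Definition ext (n m : nat) (A : {set bstr n}) : {set bstr (n + m)} :=
  [set w : bstr (n + m) | @restr n m w \in A].

From mathcomp Require Import all_boot all_order all_algebra algC zify ring.
Set Implicit Arguments. Unset Strict Implicit. Unset Printing Implicit Defensive.
Import Order.TTheory GRing.Theory Num.Theory.
Local Open Scope ring_scope.

(* Write mu_N(E) = 2^-N M_N(E), where M_j(E) is the double sum over E of the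
   phase factors of the first j steps, coupled by agreement of the j-th bits.
   If E is invariant under flipping bit j+1, pairing each (w, w') with its
   three partial flips gives M_{j+1}(E) = M_j(E) / 2: the four ways of
   choosing the new bits sum to twice [the j-th bits agree].  The extension
   A x {0,1}^m is invariant under flipping any bit beyond n, so
   M_{n+m}(A x {0,1}^m) = 2^-m M_n(A x {0,1}^m), and M_n only sees the first
   n+1 bits, whence M_n(A x {0,1}^m) = 4^m M_n(A). *)

Definition phase N j (w : bstr N) : algC :=
  \prod_(1 <= k < j.+1) ipow (bit w k) (bit w k.-1).

Definition phaseV N j (w : bstr N) : algC :=
  \prod_(1 <= k < j.+1) (ipow (bit w k) (bit w k.-1))^-1.

Definition mass_term N j (w w' : bstr N) : algC :=
  phase j w * phaseV j w' * (bit w j == bit w' j)%:R.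

Definition mass N (E : {set bstr N}) j : algC :=
  \sum_(w in E) \sum_(w' in E) mass_term j w w'.

Lemma mu_mass N (E : {set bstr N}) : mu E = 2%:R ^- N * mass E N.
Proof.
rewrite /mu /mass mulr_sumr; apply: eq_bigr => w _; rewrite mulr_sumr.
by apply: eq_bigr => w' _; rewrite /Dn /mass_term /phase /phaseV !mulrA.
Qed.

Lemma phaseS N j (w : bstr N) :
  phase j.+1 w = phase j w * ipow (bit w j.+1) (bit w j).
Proof. by rewrite /phase big_nat_recr. Qed.

Lemma phaseVS N j (w : bstr N) :
  phaseV j.+1 w = phaseV j w * (ipow (bit w j.+1) (bit w j))^-1.
Proof. by rewrite /phaseV big_nat_recr. Qed.

Lemma ipow_flip_sum a a' b b' :
  ipow a b * (ipow a' b')^-1 * (a == a')%:R +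
  ipow (~~ a) b * (ipow a' b')^-1 * (~~ a == a')%:R +
  ipow a b * (ipow (~~ a') b')^-1 * (a == ~~ a')%:R +
  ipow (~~ a) b * (ipow (~~ a') b')^-1 * (~~ a == ~~ a')%:R
  = 2%:R * (b == b')%:R :> algC.
Proof.
have iVi : 'i * 'i^-1 = 1 :> algC by rewrite mulfV ?neq0Ci.
have iDiV : 'i + 'i^-1 = 0 :> algC by rewrite invCi subrr.
have iVDi : 'i^-1 + 'i = 0 :> algC by rewrite addrC.
by case: a a' b b' => [] [] [] []; rewrite /ipow /= ?invr1 ?mulr1 ?mulr0
  ?add0r ?addr0 ?iVi ?mul1r ?iDiV ?iVDi.
Qed.

Section Flip.
Variable N : nat.
Implicit Types (w : bstr N) (E : {set bstr N}).

Definition flip (i : 'I_N.+1) w : bstr N :=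
  [ffun x => if x == i then ~~ w x else w x].

Lemma flipK i : involutive (flip i).
Proof.
by move=> w; apply/ffunP=> x; rewrite !ffunE; case: eqP => // _; rewrite negbK.
Qed.

Lemma bit_flip i w k : (k <= N)%N ->
  bit (flip i w) k = if k == i then ~~ bit w k else bit w k.
Proof.
by move=> kN; rewrite /bit ffunE -(inj_eq val_inj) /= inordK.
Qed.

Lemma phase_flip (i : 'I_N.+1) j w : (j < i)%N ->
  phase j (flip i w) = phase j w /\ phaseV j (flip i w) = phaseV j w.
Proof.
move=> ji; have := ltn_ord i.
by split; apply: eq_big_nat => k /andP[k1 k2]; rewrite !bit_flip;
  try lia; do 2!(case: eqP => [?|_]; first lia).
Qed.

Lemma sum_flip_invariant (i : 'I_N.+1) E (F : bstr N -> algC) :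
  (forall w, (flip i w \in E) = (w \in E)) ->
  \sum_(w in E) F (flip i w) = \sum_(w in E) F w.
Proof.
move=> Efl; rewrite [RHS](reindex_inj (inv_inj (flipK i))).
by apply: eq_bigl => w; rewrite Efl.
Qed.

Section Step.
Variable j : nat.
Hypothesis jN : (j < N)%N.
Let i : 'I_N.+1 := inord j.+1.

Lemma mass_term_flip_sum w w' :
  mass_term j.+1 w w' + mass_term j.+1 (flip i w) w' +
  mass_term j.+1 w (flip i w') + mass_term j.+1 (flip i w) (flip i w')
  = 2%:R * mass_term j w w'.
Proof.
have vi : (i : nat) = j.+1 by rewrite inordK.
have ji : (j < i)%N by rewrite vi.
have bit_new u : bit (flip i u) j.+1 = ~~ bit u j.+1.
  by rewrite bit_flip // vi eqxx.
have bit_old u : bit (flip i u) j = bit u j.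
  by rewrite bit_flip ?vi ?ltn_eqF // ltnW.
rewrite /mass_term !phaseS !phaseVS !bit_new !bit_old.
case: (phase_flip w ji) => -> _; case: (phase_flip w' ji) => _ ->.
by rewrite [RHS]mulrCA -(ipow_flip_sum (bit w j.+1) (bit w' j.+1)); ring.
Qed.

Lemma mass_flip_half E :
  (forall w, (flip i w \in E) = (w \in E)) -> 2%:R * mass E j.+1 = mass E j.
Proof.
move=> Efl; apply: (mulfI (_ : 2%:R != 0 :> algC)); first by rewrite pnatr_eq0.
have -> : 2%:R * (2%:R * mass E j.+1) =
    mass E j.+1 + mass E j.+1 + mass E j.+1 + mass E j.+1.
  by ring.
have flipl : mass E j.+1 =
    \sum_(w in E) \sum_(w' in E) mass_term j.+1 (flip i w) w'.
  by rewrite (sum_flip_invariant (fun w => \sum_(w' in E) mass_term j.+1 w w') Efl).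
have flipr : mass E j.+1 =
    \sum_(w in E) \sum_(w' in E) mass_term j.+1 w (flip i w').
  by apply: eq_bigr => w _; rewrite (sum_flip_invariant (mass_term j.+1 w) Efl).
have fliplr : mass E j.+1 =
    \sum_(w in E) \sum_(w' in E) mass_term j.+1 (flip i w) (flip i w').
  rewrite flipl; apply: eq_bigr => w _.
  by rewrite (sum_flip_invariant (mass_term j.+1 _) Efl).
rewrite {2}flipl {2}flipr {2}fliplr -!big_split /mass mulr_sumr.
apply: eq_bigr => w _; rewrite -!big_split mulr_sumr.
by apply: eq_bigr => w' _; apply: mass_term_flip_sum.
Qed.

End Step.
End Flip.

Section Extension.
Variables n m : nat.
(* [m.+1] rather than [m] extra bits, so that [inord] is available on ['I_M]. *)
Local Notation M := m.+1.
Implicit Types (A : {set bstr n}) (u : bstr n) (w : bstr (n + M)).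

Definition tail w : {ffun 'I_M -> bool} := [ffun j : 'I_M => w (inord (n.+1 + j))].

Definition glue u (t : {ffun 'I_M -> bool}) : bstr (n + M) :=
  [ffun i : 'I_(n + M).+1 => if (i <= n)%N then u (inord i) else t (inord (i - n.+1))].

Lemma restr_glue u t : restr (glue u t) = u.
Proof.
apply/ffunP => x; rewrite !ffunE /= (_ : (x <= n)%N) ?inord_val //.
by have := ltn_ord x; lia.
Qed.

Lemma tail_glue u : cancel (glue u) tail.
Proof.
move=> t; apply/ffunP => j; have jM := ltn_ord j.
rewrite !ffunE inordK; last by lia.
by rewrite ifF ?addKn ?inord_val //; lia.
Qed.

Lemma glue_restr_tail w : glue (restr w) (tail w) = w.
Proof.
apply/ffunP => i; have := ltn_ord i; rewrite !ffunE.
by case: (leqP i n) => iin i_lt; congr (w _); apply: val_inj;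
  rewrite /= !inordK //; lia.
Qed.

Lemma card_restr_fiber u : #|[pred w : bstr (n + M) | restr w == u]| = (2 ^ M)%N.
Proof.
have <- : #|[set glue u t | t in [set: {ffun 'I_M -> bool}]]| = (2 ^ M)%N.
  by rewrite (card_imset _ (can_inj (tail_glue u))) cardsT card_ffun card_bool card_ord.
apply: eq_card => w /=.
apply/eqP/imsetP => [<-|[t _ ->]]; last exact: restr_glue.
by exists (tail w); rewrite ?inE ?glue_restr_tail.
Qed.

Lemma sum_ext A (F : bstr n -> algC) :
  \sum_(w in ext M A) F (restr w) = (2 ^ M)%:R * \sum_(u in A) F u.
Proof.
rewrite (partition_big (@restr n M) (mem A)); last by move=> w; rewrite inE.
rewrite mulr_sumr; apply: eq_bigr => u Au.
rewrite (eq_big (fun w => restr w == u) (fun _ => F u)).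
- by rewrite sumr_const card_restr_fiber mulr_natl.
- by move=> w /=; rewrite inE; case: eqP => [->|_]; rewrite ?andbT ?andbF.
- by move=> w /andP[_ /eqP ->].
Qed.

Lemma flip_ext A k w : (n < k <= n + M)%N ->
  (flip (inord k) w \in ext M A) = (w \in ext M A).
Proof.
move=> /andP[nk km]; rewrite !inE; congr (_ \in A); apply/ffunP => x.
rewrite !ffunE; case: eqP => // /(congr1 val) /=; rewrite inordK //.
by have := ltn_ord x; lia.
Qed.

Lemma mass_ext_shift A d : (d <= M)%N ->
  mass (ext M A) n = 2%:R ^+ d * mass (ext M A) (n + d).
Proof.
elim: d => [|d IH] dm; first by rewrite addn0 mul1r.
rewrite IH 1?ltnW // -(mass_flip_half (j := n + d)); last 2 first.
- by rewrite ltn_add2l.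
- by move=> w; apply: flip_ext; lia.
by rewrite [(n + d.+1)%N]addnS exprSr mulrA.
Qed.

Lemma bit_restr w k : (k <= n)%N -> bit (restr w) k = bit w k.
Proof.
move=> kn; rewrite /bit /restr ffunE; congr (w _); apply: val_inj => /=.
by rewrite !inordK //; lia.
Qed.

Lemma mass_term_restr w w' :
  mass_term n (restr w) (restr w') = mass_term n w w'.
Proof.
have eq_prod (f : bool -> bool -> algC) (v : bstr (n + M)) :
    \prod_(1 <= k < n.+1) f (bit (restr v) k) (bit (restr v) k.-1) =
    \prod_(1 <= k < n.+1) f (bit v k) (bit v k.-1).
  by apply: eq_big_nat => k /andP[k1 k2]; rewrite !bit_restr //; lia.
by rewrite /mass_term /phase /phaseV eq_prod (eq_prod (fun a b => (ipow a b)^-1))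
  !bit_restr.
Qed.

Lemma mass_ext A : mass (ext M A) n = 2%:R ^+ M * (2%:R ^+ M * mass A n).
Proof.
rewrite /mass -(eq_bigr _ (fun w _ => eq_bigr _ (fun w' _ => mass_term_restr w w'))).
under eq_bigr => w _ do rewrite (sum_ext A (mass_term n (restr w))).
by rewrite (sum_ext A (fun u => (2 ^ M)%:R * \sum_(u' in A) mass_term n u u'))
  -mulr_sumr natrX.
Qed.

End Extension.

Theorem corollary3p2 (n m : nat) (hn : (1 <= n)%N) (hm : (1 <= m)%N)
  (A : {set bstr n}) (hA : A \subset Omega n) :
  mu (@ext n m A) = mu A.
Proof.
case: m hm => [//|m] _.
have two_m_neq0 : (2%:R : algC) ^+ m.+1 != 0 by rewrite expf_eq0 pnatr_eq0.
have top : mass (ext m.+1 A) (n + m.+1) = 2%:R ^+ m.+1 * mass A n.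
  apply: (mulfI two_m_neq0).
  by rewrite -mass_ext_shift // mass_ext.
rewrite !mu_mass top exprD invfM mulrA -(mulrA _ _ (2%:R ^+ m.+1)) mulVf //.
by rewrite mulr1.
Qed.
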